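(* Let $n=3$, $I_1=\{1,2\}$, $I_2=\{1,3\}$, and $f=f_1+f_2$ with $$f_1=8+\tfrac12x_1^2x_2^4+(x_1^2-2x_1^3)x_2^3+(2x_1+10x_1^2+4x_1^3+3x_1^4)x_2^2+4(x_1-2x_1^2)x_2,\qquad f_2=x_1^2x_3^2.$$ Then $f$ is nonnegative on $\mathbb R^3$, there are no $\sigma_1\in\Sigma[x(I_1)]$, $\sigma_2\in\Sigma[x(I_2)]$ with $f=\sigma_1+\sigma_2$, but there exist $\sigma_1\in\Sigma[x(I_1)]_7$, $\sigma_2\in\Sigma[x(I_2)]_7$ with $$f=\frac{\sigma_1}{\Theta_1^2}+\frac{\sigma_2}{\Theta_2^2},\qquad \Theta_1=(x_1^2+x_2^2+1)(x_1^2+1),\ \Theta_2=(x_1^2+x_3^2+1)(x_1^2+1).$$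
   Context: For $T\subseteq\{1,\dots,n\}$, $x(T)=(x_i)_{i\in T}$; $\Sigma[x(T)]$ is the set of sums of squares of polynomials in the variables $x(T)$, and $\Sigma[x(T)]_t$ those sums of squares of polynomials of degree at most $t$. *)

From Stdlib Require Import Reals List.
Open Scope R_scope.

Record mono := Mono { mc : R; e1 : nat; e2 : nat; e3 : nat }.

Definition mono_eval (m : mono) (x1 x2 x3 : R) : R :=
  mc m * x1 ^ e1 m * x2 ^ e2 m * x3 ^ e3 m.

Definition poly := list mono.

Definition peval (p : poly) (x1 x2 x3 : R) : R :=
  fold_right (fun m acc => mono_eval m x1 x2 x3 + acc) 0 p.

Definition mono_in (T : list nat) (t : nat) (m : mono) : Prop :=
  (e1 m <> 0%nat -> In 1%nat T) /\
  (e2 m <> 0%nat -> In 2%nat T) /\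
  (e3 m <> 0%nat -> In 3%nat T) /\
  (e1 m + e2 m + e3 m <= t)%nat.

Definition poly_in (T : list nat) (t : nat) (p : poly) : Prop :=
  Forall (mono_in T t) p.

Definition sos_eval (s : list poly) (x1 x2 x3 : R) : R :=
  fold_right (fun p acc => (peval p x1 x2 x3) ^ 2 + acc) 0 s.

Definition SOS_deg (T : list nat) (t : nat) (sigma : R -> R -> R -> R) : Prop :=
  exists s : list poly, Forall (poly_in T t) s /\
    forall x1 x2 x3, sigma x1 x2 x3 = sos_eval s x1 x2 x3.

Definition SOS (T : list nat) (sigma : R -> R -> R -> R) : Prop :=
  exists t, SOS_deg T t sigma.

Definition I1 : list nat := 1%nat :: 2%nat :: nil.
Definition I2 : list nat := 1%nat :: 3%nat :: nil.

Definition f1 (x1 x2 x3 : R) : R :=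
  8 + /2 * x1^2 * x2^4 + (x1^2 - 2 * x1^3) * x2^3
  + (2 * x1 + 10 * x1^2 + 4 * x1^3 + 3 * x1^4) * x2^2
  + 4 * (x1 - 2 * x1^2) * x2.

Definition f2 (x1 x2 x3 : R) : R := x1^2 * x3^2.

Definition fpoly (x1 x2 x3 : R) : R := f1 x1 x2 x3 + f2 x1 x2 x3.

Definition Theta1 (x1 x2 x3 : R) : R := (x1^2 + x2^2 + 1) * (x1^2 + 1).
Definition Theta2 (x1 x2 x3 : R) : R := (x1^2 + x3^2 + 1) * (x1^2 + 1).

From Stdlib Require Import Reals List ZArith Lra Lia Psatz.
Import ListNotations.
Open Scope R_scope.

(* The rational decomposition, and with it nonnegativity, comes from explicit
   certificates: f2 Theta2^2 is the square of x1 x3 Theta2, and f1 Theta1^2 has a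
   positive definite Gram matrix in the 25 monomials x1^a x2^b of degree at most 7
   occurring in it, so a rounded LDL^T factorization corrected by squares of binomials
   writes it as a sum of squares with rational weights.

   In fact f is not a sum of squares at all. Substituting x_i = y_i t^(w_i) and letting
   t -> oo shows that the squares of an SOS decomposition cannot contain monomials of
   weight above half the maximal weight of f; the weights (-2,1,2), (1,-2,-1), (1,1,2)
   leave only 1, x1 x2, x1 x2^2, x1^2 x2, x1 x3. A combination of point evaluations that
   is nonnegative on squares of such polynomials but negative on f rules out any
   decomposition. *)

Lemma sos_eval_nonneg s x1 x2 x3 : 0 <= sos_eval s x1 x2 x3.
Proof.
  induction s as [|p s IH]; simpl; [lra|].
  pose proof (pow2_ge_0 (peval p x1 x2 x3)); lra.
Qed.

Lemma sos_eval_app s s' x1 x2 x3 :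
  sos_eval (s ++ s') x1 x2 x3 = sos_eval s x1 x2 x3 + sos_eval s' x1 x2 x3.
Proof. induction s as [|p s IH]; simpl; [ring | rewrite IH; ring]. Qed.

Lemma sqr_le_sos_eval p s x1 x2 x3 :
  In p s -> peval p x1 x2 x3 ^ 2 <= sos_eval s x1 x2 x3.
Proof.
  induction s as [|q s IH]; simpl; [tauto|].
  pose proof (sos_eval_nonneg s x1 x2 x3); pose proof (pow2_ge_0 (peval q x1 x2 x3)).
  intros [->|Hp]; [lra|]. specialize (IH Hp); lra.
Qed.

(** * Laurent sums in t *)

Lemma powerRZ_le_exp t n m : 1 <= t -> (n <= m)%Z -> powerRZ t n <= powerRZ t m.
Proof.
  intros Ht Hnm. replace m with (n + Z.of_nat (Z.to_nat (m - n)))%Z by lia.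
  rewrite powerRZ_add, <- pow_powerRZ by lra.
  pose proof (powerRZ_lt t n ltac:(lra)). pose proof (pow_R1_Rle t (Z.to_nat (m - n)) Ht).
  nra.
Qed.

Lemma powerRZ_pred t n : 0 < t -> powerRZ t n = powerRZ t (n - 1) * t.
Proof.
  intros Ht. rewrite <- (powerRZ_1 t) at 3. rewrite <- powerRZ_add by lra. f_equal; lia.
Qed.

Definition laurent (l : list (R * Z)) (t : R) : R :=
  fold_right (fun ce acc => fst ce * powerRZ t (snd ce) + acc) 0 l.

Definition laurent_norm (l : list (R * Z)) : R :=
  fold_right (fun ce acc => Rabs (fst ce) + acc) 0 l.

Lemma laurent_le_norm l t M : 1 <= t -> Forall (fun ce => (snd ce <= M)%Z) l ->
  Rabs (laurent l t) <= laurent_norm l * powerRZ t M.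
Proof.
  intros Ht Hl. induction Hl as [|[c e] l He Hl IH]; simpl in *.
  - rewrite Rabs_R0. lra.
  - eapply Rle_trans; [apply Rabs_triang|].
    pose proof (powerRZ_lt t e ltac:(lra)). pose proof (powerRZ_le_exp t e M Ht He).
    pose proof (Rabs_pos c).
    rewrite Rabs_mult, (Rabs_right (powerRZ t e)) by lra. nra.
Qed.

Definition laurent_coef (N : Z) (l : list (R * Z)) : R :=
  fold_right (fun ce acc => fst ce + acc) 0 (filter (fun ce => Z.eqb (snd ce) N) l).

Lemma laurent_split_exp l N t :
  laurent l t = laurent_coef N l * powerRZ t N
                + laurent (filter (fun ce => negb (Z.eqb (snd ce) N)) l) t.
Proof.
  unfold laurent_coef. induction l as [|[c e] l IH]; simpl; [ring|].
  destruct (Z.eqb_spec e N) as [->|]; simpl; rewrite IH; ring.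
Qed.

Lemma eq0_of_linear_bound c K : (forall t, 1 <= t -> Rabs c * t <= K) -> c = 0.
Proof.
  intros H. destruct (Req_dec c 0) as [|Hc]; [assumption|exfalso].
  pose proof (Rabs_pos_lt c Hc) as Hcp.
  pose proof (H 1 (Rle_refl 1)).
  specialize (H (K / Rabs c + 1)).
  assert (Rabs c * (K / Rabs c + 1) = K + Rabs c) by (field; lra).
  assert (0 <= K / Rabs c) by (apply Rle_mult_inv_pos; lra).
  lra.
Qed.

Lemma laurent_lead_eq0 c N l B K :
  (B < N)%Z -> Forall (fun ce => (snd ce <= N - 1)%Z) l ->
  (forall t, 1 <= t -> Rabs (c * powerRZ t N + laurent l t) <= K * powerRZ t B) -> c = 0.
Proof.
  intros HBN Hl Hgrowth.
  apply (eq0_of_linear_bound c (Rabs K + laurent_norm l)). intros t Ht.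
  set (P := powerRZ t (N - 1)).
  assert (HP : 0 < P) by (apply powerRZ_lt; lra).
  assert (Hlead : Rabs c * (P * t) <= K * powerRZ t B + laurent_norm l * P).
  { pose proof (Hgrowth t Ht) as Hl_t.
    pose proof (laurent_le_norm l t (N - 1) Ht Hl) as Hrest_t.
    pose proof (Rabs_triang (c * powerRZ t N + laurent l t) (- laurent l t)) as Htri.
    replace (c * powerRZ t N + laurent l t + - laurent l t) with (c * powerRZ t N)
      in Htri by ring.
    rewrite Rabs_Ropp, Rabs_mult, (Rabs_right (powerRZ t N)) in Htri
      by (apply Rle_ge, powerRZ_le; lra).
    unfold P. rewrite <- powerRZ_pred by lra. lra. }
  assert (HKP : K * powerRZ t B <= Rabs K * P).
  { pose proof (powerRZ_le_exp t B (N - 1) Ht ltac:(lia)).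
    pose proof (powerRZ_lt t B ltac:(lra)).
    pose proof (Rle_abs K). pose proof (Rabs_pos K). unfold P in *. nra. }
  apply (Rmult_le_reg_r P); [exact HP | nra].
Qed.

Lemma laurent_eq0_of_growth_window k : forall l B K,
  Forall (fun ce => (B < snd ce <= B + Z.of_nat k)%Z) l ->
  (forall t, 1 <= t -> Rabs (laurent l t) <= K * powerRZ t B) ->
  forall t, 1 <= t -> laurent l t = 0.
Proof.
  induction k as [|k IH]; intros l B K Hl Hgrowth.
  - destruct Hl as [|ce l' Hce]; [reflexivity|]. simpl in Hce. lia.
  - set (N := (B + Z.of_nat (S k))%Z).
    set (rest := filter (fun ce => negb (Z.eqb (snd ce) N)) l).
    assert (Hrest : Forall (fun ce => (B < snd ce <= B + Z.of_nat k)%Z) rest).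
    { apply Forall_forall. intros ce Hce. apply filter_In in Hce as [Hce Hneq].
      rewrite Forall_forall in Hl. specialize (Hl ce Hce).
      apply Bool.negb_true_iff, Z.eqb_neq in Hneq. unfold N in Hneq. lia. }
    assert (Hcoef : laurent_coef N l = 0).
    { apply (laurent_lead_eq0 _ N rest B K); [unfold N; lia| |].
      - refine (Forall_impl _ _ Hrest). intros ce Hce. unfold N. lia.
      - intros t Ht. rewrite <- laurent_split_exp. apply Hgrowth, Ht. }
    assert (Hsplit : forall t, laurent l t = laurent rest t).
    { intro t. rewrite (laurent_split_exp l N t), Hcoef, Rmult_0_l, Rplus_0_l. reflexivity. }
    intros t Ht. rewrite Hsplit. apply (IH rest B K Hrest); [|exact Ht].
    intros s Hs. rewrite <- Hsplit. apply Hgrowth, Hs.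
Qed.

Lemma exists_exp_upper_bound (l : list (R * Z)) : exists M, Forall (fun ce => (snd ce <= M)%Z) l.
Proof.
  induction l as [|ce l [M HM]]; [exists 0%Z; constructor|].
  exists (Z.max (snd ce) M). constructor; [lia|].
  apply (Forall_impl _ (fun ce' H => Z.le_trans _ _ _ H (Z.le_max_r _ _)) HM).
Qed.

Lemma laurent_eq0_of_growth l B K :
  Forall (fun ce => (B < snd ce)%Z) l ->
  (forall t, 1 <= t -> Rabs (laurent l t) <= K * powerRZ t B) ->
  forall t, 1 <= t -> laurent l t = 0.
Proof.
  intros Hl. destruct (exists_exp_upper_bound l) as [M HM].
  apply (laurent_eq0_of_growth_window (Z.to_nat (M - B))).
  rewrite Forall_forall in Hl, HM |- *. intros ce Hce.
  specialize (Hl ce Hce); specialize (HM ce Hce). lia.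
Qed.

(** * Weighted truncation of sums of squares *)

Definition weight (w1 w2 w3 : Z) (m : mono) : Z :=
  (w1 * Z.of_nat (e1 m) + w2 * Z.of_nat (e2 m) + w3 * Z.of_nat (e3 m))%Z.

Definition laurent_of (w1 w2 w3 : Z) (p : poly) (y1 y2 y3 : R) : list (R * Z) :=
  map (fun m => (mono_eval m y1 y2 y3, weight w1 w2 w3 m)) p.

Lemma pow_mul_powerRZ y t w n : 0 < t ->
  (y * powerRZ t w) ^ n = y ^ n * powerRZ t (w * Z.of_nat n).
Proof.
  intros Ht. induction n as [|n IH].
  - rewrite Z.mul_0_r. simpl. ring.
  - rewrite Nat2Z.inj_succ, Z.mul_succ_r, powerRZ_add by lra. simpl. rewrite IH. ring.
Qed.

Lemma peval_scale w1 w2 w3 p y1 y2 y3 t : 0 < t ->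
  peval p (y1 * powerRZ t w1) (y2 * powerRZ t w2) (y3 * powerRZ t w3)
  = laurent (laurent_of w1 w2 w3 p y1 y2 y3) t.
Proof.
  intros Ht. induction p as [|m p IH]; simpl; [reflexivity|].
  rewrite IH. unfold mono_eval, weight. rewrite !pow_mul_powerRZ, !powerRZ_add by lra. ring.
Qed.

Lemma peval_laurent_at1 w1 w2 w3 p y1 y2 y3 :
  peval p y1 y2 y3 = laurent (laurent_of w1 w2 w3 p y1 y2 y3) 1.
Proof. rewrite <- peval_scale, !powerRZ_R1, !Rmult_1_r by lra. reflexivity. Qed.

Lemma laurent_of_filter w1 w2 w3 (f : mono -> bool) p y1 y2 y3 t :
  laurent (laurent_of w1 w2 w3 p y1 y2 y3) t
  = laurent (laurent_of w1 w2 w3 (filter f p) y1 y2 y3) t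
    + laurent (laurent_of w1 w2 w3 (filter (fun m => negb (f m)) p) y1 y2 y3) t.
Proof. induction p as [|m p IH]; simpl; [ring|]. destruct (f m); simpl; rewrite IH; ring. Qed.

Definition trunc (w1 w2 w3 B : Z) (p : poly) : poly :=
  filter (fun m => (weight w1 w2 w3 m <=? B)%Z) p.

Lemma abs_le_of_sqr_le q C T : 0 < T -> q ^ 2 <= C * T ^ 2 -> Rabs q <= (1 + Rabs C) * T.
Proof.
  intros HT Hq. rewrite <- (pow2_abs q) in Hq.
  pose proof (Rle_abs C). pose proof (Rabs_pos C).
  destruct (Rle_lt_dec (Rabs q) ((1 + Rabs C) * T)) as [|Hlt]; [assumption|exfalso].
  assert (0 < (1 + Rabs C) * T) by nra.
  assert (((1 + Rabs C) * T) ^ 2 < Rabs q ^ 2) by nra.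
  assert (C * T ^ 2 <= (1 + Rabs C) ^ 2 * T ^ 2) by nra.
  nra.
Qed.

Lemma peval_trunc_of_growth w1 w2 w3 B p y1 y2 y3 C :
  (forall t, 1 <= t ->
     peval p (y1 * powerRZ t w1) (y2 * powerRZ t w2) (y3 * powerRZ t w3) ^ 2
     <= C * powerRZ t (2 * B)) ->
  peval p y1 y2 y3 = peval (trunc w1 w2 w3 B p) y1 y2 y3.
Proof.
  intros Hgrowth.
  set (low := laurent_of w1 w2 w3 (trunc w1 w2 w3 B p) y1 y2 y3).
  set (high := laurent_of w1 w2 w3
                 (filter (fun m => negb (weight w1 w2 w3 m <=? B)%Z) p) y1 y2 y3).
  assert (Hhigh : laurent high 1 = 0).
  { apply (laurent_eq0_of_growth high B (1 + Rabs C + laurent_norm low)); [| |lra].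
    - apply Forall_forall. intros ce Hce. apply in_map_iff in Hce as [m [<- Hm]].
      apply filter_In in Hm as [_ Hm]. apply Bool.negb_true_iff, Z.leb_gt in Hm. exact Hm.
    - intros t Ht.
      assert (HtB : 0 < powerRZ t B) by (apply powerRZ_lt; lra).
      assert (Hp : Rabs (laurent low t + laurent high t) <= (1 + Rabs C) * powerRZ t B).
      { unfold low, high, trunc.
        rewrite <- (laurent_of_filter w1 w2 w3 (fun m => (weight w1 w2 w3 m <=? B)%Z)),
          <- peval_scale by lra.
        apply (abs_le_of_sqr_le _ C _ HtB).
        replace (powerRZ t B ^ 2) with (powerRZ t (2 * B)); [exact (Hgrowth t Ht)|].
        replace (2 * B)%Z with (B + B)%Z by lia. rewrite powerRZ_add by lra. ring. }
      assert (Hlow : Rabs (laurent low t) <= laurent_norm low * powerRZ t B).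
      { apply laurent_le_norm; [exact Ht|]. apply Forall_forall. intros ce Hce.
        apply in_map_iff in Hce as [m [<- Hm]]. apply filter_In in Hm as [_ Hm].
        apply Z.leb_le in Hm. exact Hm. }
      pose proof (Rabs_triang (laurent low t + laurent high t) (- laurent low t)) as Htri.
      replace (laurent low t + laurent high t + - laurent low t) with (laurent high t)
        in Htri by ring.
      rewrite Rabs_Ropp in Htri. nra. }
  rewrite (peval_laurent_at1 w1 w2 w3 p), (peval_laurent_at1 w1 w2 w3 (trunc w1 w2 w3 B p)).
  rewrite (laurent_of_filter w1 w2 w3 (fun m => (weight w1 w2 w3 m <=? B)%Z)).
  fold high. rewrite Hhigh. unfold low, trunc. ring.
Qed.

(* Weighted form of Reznick's half Newton polytope argument. *)
Lemma sos_trunc_represents w1 w2 w3 B ss q :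
  (forall x1 x2 x3, sos_eval ss x1 x2 x3 = peval q x1 x2 x3) ->
  Forall (fun m => (weight w1 w2 w3 m <= 2 * B)%Z) q ->
  forall x1 x2 x3, sos_eval (map (trunc w1 w2 w3 B) ss) x1 x2 x3 = peval q x1 x2 x3.
Proof.
  intros Hss Hq x1 x2 x3. rewrite <- Hss.
  assert (Htrunc : forall p, In p ss -> forall y1 y2 y3,
             peval p y1 y2 y3 = peval (trunc w1 w2 w3 B p) y1 y2 y3).
  { intros p Hp y1 y2 y3.
    apply (peval_trunc_of_growth _ _ _ _ _ _ _ _ (laurent_norm (laurent_of w1 w2 w3 q y1 y2 y3))).
    intros t Ht. eapply Rle_trans; [apply (sqr_le_sos_eval p ss), Hp|].
    rewrite Hss, peval_scale by lra. eapply Rle_trans; [apply Rle_abs|].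
    apply laurent_le_norm; [exact Ht|]. apply Forall_map. exact Hq. }
  clear Hss. induction ss as [|p ss IH]; simpl; [reflexivity|].
  rewrite <- Htrunc by (left; reflexivity).
  rewrite IH; [reflexivity|]. intros p' Hp'. apply Htrunc. right. exact Hp'.
Qed.

Lemma in_trunc w1 w2 w3 B p m :
  In m (trunc w1 w2 w3 B p) -> (weight w1 w2 w3 m <= B)%Z /\ In m p.
Proof. unfold trunc. rewrite filter_In, Z.leb_le. tauto. Qed.

(** * f is not a sum of squares *)

Definition f_monos : poly :=
  [Mono 8 0 0 0; Mono (/2) 2 4 0; Mono 1 2 3 0; Mono (-2) 3 3 0; Mono 2 1 2 0; Mono 10 2 2 0;
   Mono 4 3 2 0; Mono 3 4 2 0; Mono 4 1 1 0; Mono (-8) 2 1 0; Mono 1 2 0 2].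

Lemma fpoly_peval x1 x2 x3 : fpoly x1 x2 x3 = peval f_monos x1 x2 x3.
Proof. unfold fpoly, f1, f2, f_monos, peval, mono_eval. simpl. field. Qed.

Lemma f_monos_weight_le w1 w2 w3 B :
  forallb (fun m => weight w1 w2 w3 m <=? 2 * B)%Z f_monos = true ->
  Forall (fun m => (weight w1 w2 w3 m <= 2 * B)%Z) f_monos.
Proof.
  intros H. apply Forall_forall. intros m Hm. apply Z.leb_le.
  rewrite forallb_forall in H. exact (H m Hm).
Qed.

Lemma weights_support m :
  (weight (-2) 1 2 m <= 0)%Z -> (weight 1 (-2) (-1) m <= 0)%Z -> (weight 1 1 2 m <= 3)%Z ->
  (e1 m = 0 /\ e2 m = 0 /\ e3 m = 0)%nat \/ (e1 m = 1 /\ e2 m = 1 /\ e3 m = 0)%nat \/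
  (e1 m = 1 /\ e2 m = 2 /\ e3 m = 0)%nat \/ (e1 m = 2 /\ e2 m = 1 /\ e3 m = 0)%nat \/
  (e1 m = 1 /\ e2 m = 0 /\ e3 m = 1)%nat.
Proof. unfold weight. lia. Qed.

Definition reduced_mono (m : mono) : Prop :=
  (weight (-2) 1 2 m <= 0)%Z /\ (weight 1 (-2) (-1) m <= 0)%Z /\ (weight 1 1 2 m <= 3)%Z.

Lemma peval_reduced_shape p : Forall reduced_mono p ->
  exists a b c d e, forall x1 x2 x3,
    peval p x1 x2 x3 = a + b * x1 * x2 + c * x1 * x2 ^ 2 + d * x1 ^ 2 * x2 + e * x1 * x3.
Proof.
  induction 1 as [|[k i j l] p [Ha [Hb Hc]] _ [a [b [c [d [e IH]]]]]].
  - exists 0, 0, 0, 0, 0. intros. simpl. ring.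
  - pose proof (weights_support _ Ha Hb Hc) as Hs. cbn [e1 e2 e3] in Hs.
    destruct Hs as [[-> [-> ->]]|[[-> [-> ->]]|[[-> [-> ->]]|[[-> [-> ->]]|[-> [-> ->]]]]]]; simpl.
    + exists (k + a), b, c, d, e. intros. rewrite IH. unfold mono_eval. simpl. ring.
    + exists a, (k + b), c, d, e. intros. rewrite IH. unfold mono_eval. simpl. ring.
    + exists a, b, (k + c), d, e. intros. rewrite IH. unfold mono_eval. simpl. ring.
    + exists a, b, c, (k + d), e. intros. rewrite IH. unfold mono_eval. simpl. ring.
    + exists a, b, c, d, (k + e). intros. rewrite IH. unfold mono_eval. simpl. ring.
Qed.

(* Evaluation at points with x3 = 0 (killing the x1 x3 term); on the span of
   1, x1 x2, x1 x2^2, x1^2 x2 the quadratic form g |-> sep (g^2) is the square of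
   one linear form, while sep f < 0. *)
Definition sep (g : R -> R -> R -> R) : R :=
  (-35) * g 1 1 0 + (-493/2) * g 1 (-1) 0 + (-147/2) * g 1 2 0 + (1106/15) * g 1 (-2) 0
  + (651/10) * g 1 3 0 + (1442/3) * g (-1) 1 0 + (112/3) * g (-1) (-1) 0
  + (-1427/6) * g (-1) 2 0 + (-211/6) * g 2 1 0 + (553/6) * g (-2) 1 0.

Lemma sep_fpoly : sep fpoly = -672.
Proof. unfold sep, fpoly, f1, f2. field. Qed.

Lemma sep_sos_nonneg ss : Forall (Forall reduced_mono) ss -> 0 <= sep (sos_eval ss).
Proof.
  induction 1 as [|p ss Hp _ IH]; [unfold sep; simpl; lra|].
  destruct (peval_reduced_shape p Hp) as [a [b [c [d [e Hshape]]]]].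
  replace (sep (sos_eval (p :: ss)))
    with (((-11) * a + 10 * b - 44 * c - 28 * d) ^ 2 + sep (sos_eval ss))
    by (unfold sep; simpl sos_eval; rewrite !Hshape; field).
  pose proof (pow2_ge_0 ((-11) * a + 10 * b - 44 * c - 28 * d)). lra.
Qed.

Lemma fpoly_not_sos : ~ exists ss, forall x1 x2 x3, sos_eval ss x1 x2 x3 = fpoly x1 x2 x3.
Proof.
  intros [ss Hss].
  assert (H0 : forall x1 x2 x3, sos_eval ss x1 x2 x3 = peval f_monos x1 x2 x3).
  { intros. rewrite Hss. apply fpoly_peval. }
  pose proof (sos_trunc_represents _ _ _ _ _ _ H0 (f_monos_weight_le (-2) 1 2 0 eq_refl)) as H1.
  pose proof (sos_trunc_represents _ _ _ _ _ _ H1 (f_monos_weight_le 1 (-2) (-1) 0 eq_refl)) as H2.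
  pose proof (sos_trunc_represents _ _ _ _ _ _ H2 (f_monos_weight_le 1 1 2 3 eq_refl)) as H3.
  set (ss3 := map (trunc 1 1 2 3) (map (trunc 1 (-2) (-1) 0) (map (trunc (-2) 1 2 0) ss))) in H3.
  assert (Hreduced : Forall (Forall reduced_mono) ss3).
  { apply Forall_forall. intros p Hp. apply Forall_forall. intros m Hm.
    apply in_map_iff in Hp as [p2 [<- Hp]]. apply in_map_iff in Hp as [p1 [<- Hp]].
    apply in_map_iff in Hp as [p0 [<- _]].
    apply in_trunc in Hm as [Hw3 Hm]. apply in_trunc in Hm as [Hw2 Hm].
    apply in_trunc in Hm as [Hw1 _]. repeat split; assumption. }
  pose proof (sep_sos_nonneg ss3 Hreduced) as Hsep.
  replace (sep (sos_eval ss3)) with (sep fpoly) in Hsep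
    by (unfold sep; rewrite !H3, <- !fpoly_peval; reflexivity).
  rewrite sep_fpoly in Hsep. lra.
Qed.

(** * The rational certificate *)

Lemma SOS_deg_nonneg T t sigma x1 x2 x3 : SOS_deg T t sigma -> 0 <= sigma x1 x2 x3.
Proof. intros [s [_ ->]]. apply sos_eval_nonneg. Qed.

Lemma Theta1_pos x1 x2 x3 : 0 < Theta1 x1 x2 x3.
Proof. unfold Theta1. pose proof (pow2_ge_0 x1). pose proof (pow2_ge_0 x2). nra. Qed.

Lemma Theta2_pos x1 x2 x3 : 0 < Theta2 x1 x2 x3.
Proof. unfold Theta2. pose proof (pow2_ge_0 x1). pose proof (pow2_ge_0 x3). nra. Qed.

Definition scale_poly (k : R) (p : poly) : poly :=
  map (fun m => Mono (k * mc m) (e1 m) (e2 m) (e3 m)) p.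

Lemma peval_scale_poly k p x1 x2 x3 : peval (scale_poly k p) x1 x2 x3 = k * peval p x1 x2 x3.
Proof. induction p as [|m p IH]; simpl; [ring|]. rewrite IH. unfold mono_eval. simpl. ring. Qed.

Lemma poly_in_scale_poly T t k p : poly_in T t p -> poly_in T t (scale_poly k p).
Proof. intros Hp. apply Forall_map. exact Hp. Qed.

Definition mono_in_I1b (t : nat) (m : mono) : bool :=
  andb (e3 m =? 0)%nat (e1 m + e2 m <=? t)%nat.

Lemma poly_in_I1_of_check t p : forallb (mono_in_I1b t) p = true -> poly_in I1 t p.
Proof.
  intros H. apply Forall_forall. intros m Hm. rewrite forallb_forall in H.
  specialize (H m Hm). unfold mono_in_I1b in H.
  apply andb_prop in H as [H3 Hdeg]. apply Nat.eqb_eq in H3. apply Nat.leb_le in Hdeg.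
  unfold mono_in, I1. rewrite H3. simpl. intuition lia.
Qed.

Definition peval12 (p : poly) (x1 x2 : R) : R :=
  fold_right (fun m acc => mc m * (x1 ^ e1 m * x2 ^ e2 m) + acc) 0 p.

Lemma peval_peval12 t p x1 x2 x3 :
  forallb (mono_in_I1b t) p = true -> peval p x1 x2 x3 = peval12 p x1 x2.
Proof.
  induction p as [|m p IH]; simpl; [reflexivity|]. intros H.
  apply andb_prop in H as [Hm Hp]. apply andb_prop in Hm as [H3 _]. apply Nat.eqb_eq in H3.
  rewrite IH by exact Hp. unfold mono_eval. rewrite H3. ring.
Qed.

Record gram_row := GramRow { row_weight : positive; row_poly : poly }.

Definition rows_in_I1b (t : nat) (rows : list gram_row) : bool :=
  forallb (fun r => forallb (mono_in_I1b t) (row_poly r)) rows.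

Definition gram_eval (rows : list gram_row) (x1 x2 : R) : R :=
  fold_right (fun r acc => IZR (Zpos (row_weight r)) * peval12 (row_poly r) x1 x2 ^ 2 + acc)
    0 rows.

Definition gram_sos (D : R) (rows : list gram_row) : list poly :=
  map (fun r => scale_poly (sqrt (IZR (Zpos (row_weight r)) / D)) (row_poly r)) rows.

Lemma sos_eval_gram_sos D t rows x1 x2 x3 : 0 < D -> rows_in_I1b t rows = true ->
  sos_eval (gram_sos D rows) x1 x2 x3 = gram_eval rows x1 x2 / D.
Proof.
  intros HD. unfold sos_eval, gram_sos, gram_eval, rows_in_I1b.
  induction rows as [|r rows IH]; cbn [map fold_right forallb]; [intros; field; lra|].
  intros Hrows. apply andb_prop in Hrows as [Hr Hrows].
  rewrite IH, peval_scale_poly, (peval_peval12 t) by assumption.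
  rewrite Rpow_mult_distr, pow2_sqrt.
  - field. lra.
  - apply Rle_mult_inv_pos; [apply IZR_le; lia | exact HD].
Qed.

Lemma gram_sos_in D t rows :
  rows_in_I1b t rows = true -> Forall (poly_in I1 t) (gram_sos D rows).
Proof.
  intros Hrows. apply Forall_map, Forall_forall. intros r Hr.
  apply poly_in_scale_poly, poly_in_I1_of_check.
  unfold rows_in_I1b in Hrows. rewrite forallb_forall in Hrows. exact (Hrows r Hr).
Qed.

(* The first 25 rows are a rounded LDL^T factorization of a Gram matrix of
   2^60 f1 Theta1^2; the binomial and monomial rows after them absorb the rounding error. *)
Definition gram_rows : list gram_row := [
  GramRow 8372879 [Mono 1048576 0 0 0; Mono (-336503) 0 2 0; Mono 352918 1 1 0; Mono 41037 1 2 0;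
    Mono (-73866) 1 3 0; Mono (-41037) 1 4 0; Mono (-2027225) 2 0 0; Mono (-385747) 2 1 0;
    Mono 344710 2 2 0; Mono (-8207) 2 3 0; Mono 8207 2 4 0; Mono (-24622) 3 0 0;
    Mono (-558102) 3 1 0; Mono 32830 3 2 0; Mono 8207 3 3 0; Mono 16415 3 4 0; Mono 196977 4 0 0;
    Mono 935642 4 1 0; Mono 90281 4 2 0; Mono 8207 4 3 0; Mono 49244 5 1 0; Mono 32830 5 2 0;
    Mono (-98489) 6 1 0];
  GramRow 22135439 [Mono 1048576 0 1 0; Mono (-34150) 1 0 0; Mono 15523 1 1 0; Mono 310450 1 2 0;
    Mono 121076 1 3 0; Mono 3105 1 4 0; Mono (-34150) 2 0 0; Mono (-2918230) 2 1 0;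
    Mono 183166 2 2 0; Mono (-43463) 2 3 0; Mono (-3105) 2 4 0; Mono 27941 3 0 0;
    Mono (-481198) 3 1 0; Mono (-338391) 3 2 0; Mono (-90031) 3 3 0; Mono (-3105) 4 0 0;
    Mono 928246 4 1 0; Mono 3105 4 2 0; Mono (-15523) 4 3 0; Mono 189375 5 1 0; Mono 12418 5 2 0;
    Mono (-6209) 6 1 0];
  GramRow 7510591 [Mono 1048576 0 2 0; Mono 54898 1 0 0; Mono (-120782) 1 1 0; Mono (-3618) 1 2 0;
    Mono 257214 1 3 0; Mono 131714 1 4 0; Mono (-84779) 2 0 0; Mono 658018 2 1 0;
    Mono (-3088214) 2 2 0; Mono (-304876) 2 3 0; Mono (-15363) 2 4 0; Mono 36940 3 0 0;
    Mono 138872 3 1 0; Mono (-784277) 3 2 0; Mono (-161758) 3 3 0; Mono (-49026) 3 4 0;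
    Mono 61321 4 0 0; Mono (-131900) 4 1 0; Mono 810021 4 2 0; Mono 121882 4 3 0;
    Mono (-55580) 5 1 0; Mono 112391 5 2 0; Mono (-26085) 6 1 0];
  GramRow 65869423 [Mono 1048576 1 0 0; Mono (-5369) 1 1 0; Mono (-612109) 1 2 0; Mono 31088 1 3 0;
    Mono 12810 1 4 0; Mono 3262 2 0 0; Mono 295893 2 1 0; Mono (-132920) 2 2 0; Mono (-39343) 2 3 0;
    Mono 1101 2 4 0; Mono (-614400) 3 0 0; Mono (-454701) 3 1 0; Mono 209632 3 2 0;
    Mono (-39664) 3 3 0; Mono (-5967) 3 4 0; Mono (-1443) 4 0 0; Mono (-151803) 4 1 0;
    Mono 1458 4 2 0; Mono 6405 4 3 0; Mono 294519 5 1 0; Mono 20330 5 2 0; Mono (-1999) 6 1 0];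
  GramRow 245607081 [Mono 1048576 1 1 0; Mono (-84278) 1 2 0; Mono (-130988) 1 3 0;
    Mono (-1010) 1 4 0; Mono (-13642) 2 0 0; Mono 133034 2 1 0; Mono 202700 2 2 0;
    Mono (-29795) 2 3 0; Mono 417 2 4 0; Mono (-6904) 3 0 0; Mono (-1040920) 3 1 0;
    Mono 131062 3 2 0; Mono 53682 3 3 0; Mono 190 3 4 0; Mono 4953 4 0 0; Mono (-184441) 4 1 0;
    Mono (-91356) 4 2 0; Mono 4841 4 3 0; Mono 98718 5 1 0; Mono (-6964) 5 2 0; Mono 15313 6 1 0];
  GramRow 120405741 [Mono 1048576 1 2 0; Mono (-21876) 1 3 0; Mono (-22357) 1 4 0;
    Mono (-20662) 2 0 0; Mono (-23302) 2 1 0; Mono 289690 2 2 0; Mono 137259 2 3 0; Mono 7412 2 4 0;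
    Mono (-45259) 3 0 0; Mono 80568 3 1 0; Mono (-1001199) 3 2 0; Mono (-37832) 3 3 0;
    Mono 6061 3 4 0; Mono 3992 4 0 0; Mono 2877 4 1 0; Mono (-192250) 4 2 0; Mono (-34551) 4 3 0;
    Mono 32439 5 1 0; Mono 50839 5 2 0; Mono 2473 6 1 0];
  GramRow 13078482 [Mono 1048576 1 3 0; Mono 12446 1 4 0; Mono 58874 2 0 0; Mono (-180111) 2 1 0;
    Mono (-274249) 2 2 0; Mono 554615 2 3 0; Mono 5378 2 4 0; Mono (-7974) 3 0 0;
    Mono (-785471) 3 1 0; Mono (-321288) 3 2 0; Mono (-438914) 3 3 0; Mono (-361) 3 4 0;
    Mono (-33836) 4 0 0; Mono (-356698) 4 1 0; Mono 341989 4 2 0; Mono (-115089) 4 3 0;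
    Mono 119590 5 1 0; Mono 62937 5 2 0; Mono 52907 6 1 0];
  GramRow 310397 [Mono 1048576 1 4 0; Mono (-1208836) 2 0 0; Mono 1204277 2 1 0; Mono 2781163 2 2 0;
    Mono (-1677974) 2 3 0; Mono 112092 2 4 0; Mono (-33887) 3 0 0; Mono 1198942 3 1 0;
    Mono (-2974312) 3 2 0; Mono (-94491) 3 3 0; Mono (-431918) 3 4 0; Mono 522468 4 0 0;
    Mono 319426 4 1 0; Mono (-1545157) 4 2 0; Mono 728725 4 3 0; Mono (-298864) 5 1 0;
    Mono 242814 5 2 0; Mono (-233923) 6 1 0];
  GramRow 92461025 [Mono 1048576 2 0 0; Mono (-14099) 2 1 0; Mono (-735001) 2 2 0; Mono 72631 2 3 0;
    Mono 21972 2 4 0; Mono (-3213) 3 0 0; Mono 295869 3 1 0; Mono (-119584) 3 2 0;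
    Mono (-57923) 3 3 0; Mono 3288 3 4 0; Mono (-142429) 4 0 0; Mono (-487244) 4 1 0;
    Mono 48954 4 2 0; Mono (-9004) 4 3 0; Mono (-26687) 5 1 0; Mono (-12769) 5 2 0;
    Mono 70996 6 1 0];
  GramRow 440508471 [Mono 1048576 2 1 0; Mono (-184067) 2 2 0; Mono (-150973) 2 3 0;
    Mono (-1805) 2 4 0; Mono (-8920) 3 0 0; Mono 146589 3 1 0; Mono 170127 3 2 0;
    Mono (-23125) 3 3 0; Mono 647 3 4 0; Mono (-2847) 4 0 0; Mono (-401578) 4 1 0; Mono 65817 4 2 0;
    Mono 11874 4 3 0; Mono (-73539) 5 1 0; Mono (-18548) 5 2 0; Mono 7290 6 1 0];
  GramRow 241820269 [Mono 1048576 2 2 0; Mono (-30882) 2 3 0; Mono (-24219) 2 4 0;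
    Mono (-1912) 3 0 0; Mono (-26832) 3 1 0; Mono 237894 3 2 0; Mono 103357 3 3 0; Mono 4194 3 4 0;
    Mono (-19319) 4 0 0; Mono (-18915) 4 1 0; Mono (-331047) 4 2 0; Mono (-14679) 4 3 0;
    Mono (-12227) 5 1 0; Mono (-41732) 5 2 0; Mono 11218 6 1 0];
  GramRow 33704848 [Mono 1048576 2 3 0; Mono 26313 2 4 0; Mono 17396 3 0 0; Mono 192848 3 1 0;
    Mono (-528613) 3 2 0; Mono 241878 3 3 0; Mono (-994) 3 4 0; Mono 29475 4 0 0;
    Mono (-392940) 4 1 0; Mono (-144728) 4 2 0; Mono (-35783) 4 3 0; Mono (-162831) 5 1 0;
    Mono 92356 5 2 0; Mono (-13930) 6 1 0];
  GramRow 1221596 [Mono 1048576 2 4 0; Mono (-846914) 3 0 0; Mono 964410 3 1 0; Mono 1756949 3 2 0;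
    Mono (-2005165) 3 3 0; Mono 17604 3 4 0; Mono 151005 4 0 0; Mono 560337 4 1 0;
    Mono (-1442551) 4 2 0; Mono (-1135) 4 3 0; Mono 629211 5 1 0; Mono (-339300) 5 2 0;
    Mono (-100181) 6 1 0];
  GramRow 41538254 [Mono 1048576 3 0 0; Mono (-15586) 3 1 0; Mono (-602087) 3 2 0; Mono 99760 3 3 0;
    Mono 19224 3 4 0; Mono 1739 4 0 0; Mono 285512 4 1 0; Mono (-60145) 4 2 0; Mono (-20652) 4 3 0;
    Mono (-500928) 5 1 0; Mono (-31722) 5 2 0; Mono 2939 6 1 0];
  GramRow 263970189 [Mono 1048576 3 1 0; Mono (-272604) 3 2 0; Mono (-101157) 3 3 0;
    Mono (-1339) 3 4 0; Mono (-7520) 4 0 0; Mono 200564 4 1 0; Mono 102156 4 2 0;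
    Mono (-12936) 4 3 0; Mono (-135967) 5 1 0; Mono 19420 5 2 0; Mono (-23577) 6 1 0];
  GramRow 149576741 [Mono 1048576 3 2 0; Mono 16399 3 3 0; Mono (-12119) 3 4 0; Mono (-544) 4 0 0;
    Mono (-15501) 4 1 0; Mono 222325 4 2 0; Mono 54598 4 3 0; Mono (-41195) 5 1 0;
    Mono (-73336) 5 2 0; Mono (-8850) 6 1 0];
  GramRow 16065835 [Mono 1048576 3 3 0; Mono 23475 3 4 0; Mono 56521 4 0 0; Mono 296023 4 1 0;
    Mono (-942132) 4 2 0; Mono 177745 4 3 0; Mono (-146191) 5 1 0; Mono (-85620) 5 2 0;
    Mono (-94675) 6 1 0];
  GramRow 383514 [Mono 1048576 3 4 0; Mono (-1192818) 4 0 0; Mono 1221454 4 1 0; Mono 963257 4 2 0;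
    Mono (-2306616) 4 3 0; Mono 575736 5 1 0; Mono (-810452) 5 2 0; Mono 759510 6 1 0];
  GramRow 5553594 [Mono 1048576 4 0 0; Mono (-21512) 4 1 0; Mono (-215365) 4 2 0; Mono 34359 4 3 0;
    Mono 299606 5 1 0; Mono 134111 5 2 0; Mono (-512042) 6 1 0];
  GramRow 68640926 [Mono 1048576 4 1 0; Mono (-270081) 4 2 0; Mono (-44192) 4 3 0;
    Mono 242608 5 1 0; Mono 33177 5 2 0; Mono (-16411) 6 1 0];
  GramRow 36796336 [Mono 1048576 4 2 0; Mono 71626 4 3 0; Mono (-13719) 5 1 0; Mono 136827 5 2 0;
    Mono (-18396) 6 1 0];
  GramRow 1052443 [Mono 1048576 4 3 0; Mono 671033 5 1 0; Mono (-2344072) 5 2 0; Mono 70542 6 1 0];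
  GramRow 7681903 [Mono 1048576 5 1 0; Mono 619 5 2 0; Mono 272692 6 1 0];
  GramRow 251242 [Mono 1048576 5 2 0; Mono (-145373) 6 1 0];
  GramRow 100567 [Mono 1048576 6 1 0];
  GramRow 373252161536 [Mono 1 0 0 0; Mono 1 0 2 0];
  GramRow 2318688845824 [Mono 1 0 0 0; Mono (-1) 1 1 0];
  GramRow 473791725568 [Mono 1 0 0 0; Mono (-1) 1 2 0];
  GramRow 4414934876160 [Mono 1 0 0 0; Mono (-1) 1 3 0];
  GramRow 473791725568 [Mono 1 0 0 0; Mono 1 1 4 0];
  GramRow 1177568673792 [Mono 1 0 0 0; Mono (-1) 2 0 0];
  GramRow 2570037755904 [Mono 1 0 0 0; Mono (-1) 2 1 0];
  GramRow 3043829481472 [Mono 1 0 0 0; Mono 1 2 2 0];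
  GramRow 3417081643008 [Mono 1 0 0 0; Mono (-1) 2 3 0];
  GramRow 3417081643008 [Mono 1 0 0 0; Mono 1 2 4 0];
  GramRow 1471644958720 [Mono 1 0 0 0; Mono (-1) 3 0 0];
  GramRow 4091952496640 [Mono 1 0 0 0; Mono (-1) 3 1 0];
  GramRow 3890873368576 [Mono 1 0 0 0; Mono (-1) 3 2 0];
  GramRow 3417081643008 [Mono 1 0 0 0; Mono 1 3 3 0];
  GramRow 1945436684288 [Mono 1 0 0 0; Mono (-1) 3 4 0];
  GramRow 2993559699456 [Mono 1 0 0 0; Mono 1 4 0 0];
  GramRow 3244908609536 [Mono 1 0 0 0; Mono 1 4 1 0];
  GramRow 2469498191872 [Mono 1 0 0 0; Mono 1 4 2 0];
  GramRow 3417081643008 [Mono 1 0 0 0; Mono 1 4 3 0];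
  GramRow 2943289917440 [Mono 1 0 0 0; Mono 1 5 1 0];
  GramRow 3890873368576 [Mono 1 0 0 0; Mono (-1) 5 2 0];
  GramRow 2893020135424 [Mono 1 0 0 0; Mono 1 6 1 0];
  GramRow 17235869114040320 [Mono 1 0 0 0];
  GramRow 11531980898304 [Mono 1 0 1 0; Mono 1 1 0 0];
  GramRow 11571997704192 [Mono 1 0 1 0; Mono (-1) 1 1 0];
  GramRow 666946764800 [Mono 1 0 1 0; Mono 1 1 2 0];
  GramRow 11345235804160 [Mono 1 0 1 0; Mono (-1) 1 3 0];
  GramRow 11598675574784 [Mono 1 0 1 0; Mono (-1) 1 4 0];
  GramRow 11531980898304 [Mono 1 0 1 0; Mono 1 2 0 0];
  GramRow 6269299589120 [Mono 1 0 1 0; Mono (-1) 2 1 0];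
  GramRow 11211846451200 [Mono 1 0 1 0; Mono (-1) 2 2 0];
  GramRow 93372547072 [Mono 1 0 1 0; Mono (-1) 2 3 0];
  GramRow 11598675574784 [Mono 1 0 1 0; Mono 1 2 4 0];
  GramRow 11545319833600 [Mono 1 0 1 0; Mono (-1) 3 0 0];
  GramRow 10571577556992 [Mono 1 0 1 0; Mono 1 3 1 0];
  GramRow 10878373068800 [Mono 1 0 1 0; Mono 1 3 2 0];
  GramRow 11411930480640 [Mono 1 0 1 0; Mono 1 3 3 0];
  GramRow 11598675574784 [Mono 1 0 1 0; Mono 1 4 0 0];
  GramRow 9611174215680 [Mono 1 0 1 0; Mono (-1) 4 1 0];
  GramRow 11598675574784 [Mono 1 0 1 0; Mono (-1) 4 2 0];
  GramRow 11571997704192 [Mono 1 0 1 0; Mono 1 4 3 0];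
  GramRow 11198507515904 [Mono 1 0 1 0; Mono (-1) 5 1 0];
  GramRow 26677870592 [Mono 1 0 1 0; Mono 1 5 2 0];
  GramRow 13338935296 [Mono 1 0 1 0; Mono (-1) 6 1 0];
  GramRow 17106772133150720 [Mono 1 0 1 0];
  GramRow 456862466048 [Mono 1 0 2 0; Mono 1 1 0 0];
  GramRow 677446552806 [Mono 1 0 2 0; Mono 1 1 1 0];
  GramRow 196284130715 [Mono 1 0 2 0; Mono (-1) 1 2 0];
  GramRow 1645162638650 [Mono 1 0 2 0; Mono (-1) 1 3 0];
  GramRow 3987987094117 [Mono 1 0 2 0; Mono (-1) 1 4 0];
  GramRow 1933442884241 [Mono 1 0 2 0; Mono (-1) 2 0 0];
  GramRow 2783579070395 [Mono 1 0 2 0; Mono (-1) 2 1 0];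
  GramRow 3726761788758 [Mono 1 0 2 0; Mono 1 2 2 0];
  GramRow 4398367336169 [Mono 1 0 2 0; Mono 1 2 3 0];
  GramRow 1813114742505 [Mono 1 0 2 0; Mono (-1) 2 4 0];
  GramRow 2704582064574 [Mono 1 0 2 0; Mono (-1) 3 0 0];
  GramRow 3121473002906 [Mono 1 0 2 0; Mono 1 3 1 0];
  GramRow 2867750322510 [Mono 1 0 2 0; Mono 1 3 2 0];
  GramRow 406272829161 [Mono 1 0 2 0; Mono (-1) 3 3 0];
  GramRow 4289265574055 [Mono 1 0 2 0; Mono 1 3 4 0];
  GramRow 4077940425623 [Mono 1 0 2 0; Mono (-1) 4 0 0];
  GramRow 1631143012618 [Mono 1 0 2 0; Mono 1 4 1 0];
  GramRow 2098255908321 [Mono 1 0 2 0; Mono 1 4 2 0];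
  GramRow 670958577385 [Mono 1 0 2 0; Mono (-1) 4 3 0];
  GramRow 311167972220 [Mono 1 0 2 0; Mono 1 5 1 0];
  GramRow 5079553622350 [Mono 1 0 2 0; Mono 1 5 2 0];
  GramRow 4581991011697 [Mono 1 0 2 0; Mono (-1) 6 1 0];
  GramRow 17239235204003921 [Mono 1 0 2 0];
  GramRow 21042628017522 [Mono 1 1 0 0; Mono 1 1 1 0];
  GramRow 3609342045616 [Mono 1 1 0 0; Mono 1 1 2 0];
  GramRow 21390444499996 [Mono 1 1 0 0; Mono (-1) 1 3 0];
  GramRow 12903869689886 [Mono 1 1 0 0; Mono 1 1 4 0];
  GramRow 10317824817854 [Mono 1 1 0 0; Mono 1 2 0 0];
  GramRow 22493468932440 [Mono 1 1 0 0; Mono (-1) 2 1 0];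
  GramRow 20912980783680 [Mono 1 1 0 0; Mono (-1) 2 2 0];
  GramRow 10116429683822 [Mono 1 1 0 0; Mono (-1) 2 3 0];
  GramRow 211401978128 [Mono 1 1 0 0; Mono (-1) 2 4 0];
  GramRow 20088822424826 [Mono 1 1 0 0; Mono 1 3 0 0];
  GramRow 12704598250372 [Mono 1 1 0 0; Mono 1 3 1 0];
  GramRow 1954185070800 [Mono 1 1 0 0; Mono (-1) 3 2 0];
  GramRow 6828718401598 [Mono 1 1 0 0; Mono 1 3 3 0];
  GramRow 3957189520668 [Mono 1 1 0 0; Mono 1 3 4 0];
  GramRow 21691733756600 [Mono 1 1 0 0; Mono (-1) 4 0 0];
  GramRow 19557449717372 [Mono 1 1 0 0; Mono (-1) 4 1 0];
  GramRow 5007335390004 [Mono 1 1 0 0; Mono 1 4 2 0];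
  GramRow 27419791773286 [Mono 1 1 0 0; Mono 1 4 3 0];
  GramRow 35108364914958 [Mono 1 1 0 0; Mono 1 5 1 0];
  GramRow 23581578167442 [Mono 1 1 0 0; Mono 1 5 2 0];
  GramRow 15669123470860 [Mono 1 1 0 0; Mono 1 6 1 0];
  GramRow 16964348541592022 [Mono 1 1 0 0];
  GramRow 79959276634885 [Mono 1 1 1 0; Mono 1 1 2 0];
  GramRow 38832810749868 [Mono 1 1 1 0; Mono 1 1 3 0];
  GramRow 81248515315425 [Mono 1 1 1 0; Mono (-1) 1 4 0];
  GramRow 93076294226132 [Mono 1 1 1 0; Mono 1 2 0 0];
  GramRow 9958666098557 [Mono 1 1 1 0; Mono (-1) 2 1 0];
  GramRow 21742719658486 [Mono 1 1 1 0; Mono (-1) 2 2 0];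
  GramRow 108484389978624 [Mono 1 1 1 0; Mono 1 2 3 0];
  GramRow 9399454714868 [Mono 1 1 1 0; Mono (-1) 2 4 0];
  GramRow 96860863823683 [Mono 1 1 1 0; Mono 1 3 0 0];
  GramRow 115227211420727 [Mono 1 1 1 0; Mono 1 3 1 0];
  GramRow 15519071091077 [Mono 1 1 1 0; Mono 1 3 2 0];
  GramRow 45963975626719 [Mono 1 1 1 0; Mono (-1) 3 3 0];
  GramRow 93792812449261 [Mono 1 1 1 0; Mono 1 3 4 0];
  GramRow 15917284108416 [Mono 1 1 1 0; Mono (-1) 4 0 0];
  GramRow 89708138357145 [Mono 1 1 1 0; Mono 1 4 1 0];
  GramRow 85891652726671 [Mono 1 1 1 0; Mono (-1) 4 2 0];
  GramRow 93884541458776 [Mono 1 1 1 0; Mono 1 4 3 0];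
  GramRow 5316331387378 [Mono 1 1 1 0; Mono (-1) 5 1 0];
  GramRow 80365771612770 [Mono 1 1 1 0; Mono (-1) 5 2 0];
  GramRow 55353428758356 [Mono 1 1 1 0; Mono 1 6 1 0];
  GramRow 16019721153070666 [Mono 1 1 1 0];
  GramRow 27568172091054 [Mono 1 1 2 0; Mono (-1) 1 3 0];
  GramRow 50423457501721 [Mono 1 1 2 0; Mono (-1) 1 4 0];
  GramRow 30355652706451 [Mono 1 1 2 0; Mono 1 2 0 0];
  GramRow 12577923825340 [Mono 1 1 2 0; Mono (-1) 2 1 0];
  GramRow 84841896902742 [Mono 1 1 2 0; Mono 1 2 2 0];
  GramRow 3367899098520 [Mono 1 1 2 0; Mono (-1) 2 3 0];
  GramRow 15387659364948 [Mono 1 1 2 0; Mono 1 2 4 0];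
  GramRow 37958106681532 [Mono 1 1 2 0; Mono 1 3 0 0];
  GramRow 67755566371617 [Mono 1 1 2 0; Mono (-1) 3 1 0];
  GramRow 69479382159382 [Mono 1 1 2 0; Mono 1 3 2 0];
  GramRow 25625464561123 [Mono 1 1 2 0; Mono (-1) 3 3 0];
  GramRow 47193555355954 [Mono 1 1 2 0; Mono (-1) 3 4 0];
  GramRow 60533718559510 [Mono 1 1 2 0; Mono 1 4 0 0];
  GramRow 51366540342639 [Mono 1 1 2 0; Mono 1 4 1 0];
  GramRow 34749515498213 [Mono 1 1 2 0; Mono (-1) 4 2 0];
  GramRow 21791961108818 [Mono 1 1 2 0; Mono (-1) 4 3 0];
  GramRow 7484296615883 [Mono 1 1 2 0; Mono 1 5 1 0];
  GramRow 12150276286782 [Mono 1 1 2 0; Mono (-1) 5 2 0];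
  GramRow 58079720488260 [Mono 1 1 2 0; Mono (-1) 6 1 0];
  GramRow 16475344799330333 [Mono 1 1 2 0];
  GramRow 15051478663910 [Mono 1 1 3 0; Mono 1 1 4 0];
  GramRow 7379530917176 [Mono 1 1 3 0; Mono (-1) 2 0 0];
  GramRow 29196048507378 [Mono 1 1 3 0; Mono 1 2 1 0];
  GramRow 4504063894144 [Mono 1 1 3 0; Mono 1 2 2 0];
  GramRow 8760488368198 [Mono 1 1 3 0; Mono (-1) 2 3 0];
  GramRow 7536678855528 [Mono 1 1 3 0; Mono 1 2 4 0];
  GramRow 1099085685388 [Mono 1 1 3 0; Mono 1 3 0 0];
  GramRow 34059822497820 [Mono 1 1 3 0; Mono (-1) 3 1 0];
  GramRow 29918448752446 [Mono 1 1 3 0; Mono 1 3 2 0];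
  GramRow 9120107521202 [Mono 1 1 3 0; Mono 1 3 3 0];
  GramRow 6287803748582 [Mono 1 1 3 0; Mono (-1) 3 4 0];
  GramRow 1344656862060 [Mono 1 1 3 0; Mono 1 4 0 0];
  GramRow 35575621249276 [Mono 1 1 3 0; Mono (-1) 4 1 0];
  GramRow 9039230586776 [Mono 1 1 3 0; Mono 1 4 2 0];
  GramRow 3465581289958 [Mono 1 1 3 0; Mono (-1) 4 3 0];
  GramRow 3470614996896 [Mono 1 1 3 0; Mono (-1) 5 1 0];
  GramRow 13967465309274 [Mono 1 1 3 0; Mono 1 5 2 0];
  GramRow 11846683550288 [Mono 1 1 3 0; Mono (-1) 6 1 0];
  GramRow 16943362352000956 [Mono 1 1 3 0];
  GramRow 752811026755 [Mono 1 1 4 0; Mono 1 2 0 0];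
  GramRow 23308985242073 [Mono 1 1 4 0; Mono 1 2 1 0];
  GramRow 22994100753502 [Mono 1 1 4 0; Mono (-1) 2 2 0];
  GramRow 504904666943 [Mono 1 1 4 0; Mono 1 2 3 0];
  GramRow 487885262058 [Mono 1 1 4 0; Mono (-1) 2 4 0];
  GramRow 6910604381472 [Mono 1 1 4 0; Mono (-1) 3 0 0];
  GramRow 72364920683178 [Mono 1 1 4 0; Mono 1 3 1 0];
  GramRow 39838559446934 [Mono 1 1 4 0; Mono 1 3 2 0];
  GramRow 3197219559994 [Mono 1 1 4 0; Mono (-1) 3 3 0];
  GramRow 1236039652216 [Mono 1 1 4 0; Mono 1 3 4 0];
  GramRow 2523221396016 [Mono 1 1 4 0; Mono (-1) 4 0 0];
  GramRow 401872333807 [Mono 1 1 4 0; Mono (-1) 4 1 0];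
  GramRow 15145735980812 [Mono 1 1 4 0; Mono 1 4 2 0];
  GramRow 734465315975 [Mono 1 1 4 0; Mono 1 4 3 0];
  GramRow 6912866790612 [Mono 1 1 4 0; Mono (-1) 5 1 0];
  GramRow 422122853487 [Mono 1 1 4 0; Mono (-1) 5 2 0];
  GramRow 322956594485 [Mono 1 1 4 0; Mono (-1) 6 1 0];
  GramRow 16921777754106303 [Mono 1 1 4 0];
  GramRow 23328906955601 [Mono 1 2 0 0; Mono (-1) 2 1 0];
  GramRow 10288703907180 [Mono 1 2 0 0; Mono 1 2 2 0];
  GramRow 22144072879957 [Mono 1 2 0 0; Mono (-1) 2 3 0];
  GramRow 8950140854912 [Mono 1 2 0 0; Mono 1 2 4 0];
  GramRow 8737853837362 [Mono 1 2 0 0; Mono (-1) 3 0 0];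
  GramRow 46829317344240 [Mono 1 2 0 0; Mono (-1) 3 1 0];
  GramRow 62457411859651 [Mono 1 2 0 0; Mono (-1) 3 2 0];
  GramRow 12720116520589 [Mono 1 2 0 0; Mono 1 3 3 0];
  GramRow 11367787597195 [Mono 1 2 0 0; Mono 1 3 4 0];
  GramRow 43981754155126 [Mono 1 2 0 0; Mono (-1) 4 0 0];
  GramRow 4951839974616 [Mono 1 2 0 0; Mono (-1) 4 1 0];
  GramRow 19100407640862 [Mono 1 2 0 0; Mono (-1) 4 2 0];
  GramRow 23420322827149 [Mono 1 2 0 0; Mono (-1) 4 3 0];
  GramRow 8814796238166 [Mono 1 2 0 0; Mono 1 5 1 0];
  GramRow 4533962783757 [Mono 1 2 0 0; Mono (-1) 5 2 0];
  GramRow 30632854361004 [Mono 1 2 0 0; Mono 1 6 1 0];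
  GramRow 16793957053221706 [Mono 1 2 0 0];
  GramRow 35014306894214 [Mono 1 2 1 0; Mono 1 2 2 0];
  GramRow 104546419554951 [Mono 1 2 1 0; Mono (-1) 2 3 0];
  GramRow 149224597044990 [Mono 1 2 1 0; Mono 1 2 4 0];
  GramRow 26400356226114 [Mono 1 2 1 0; Mono (-1) 3 0 0];
  GramRow 176795877246212 [Mono 1 2 1 0; Mono (-1) 3 1 0];
  GramRow 211370455951168 [Mono 1 2 1 0; Mono 1 3 2 0];
  GramRow 145978996797069 [Mono 1 2 1 0; Mono (-1) 3 3 0];
  GramRow 209446494198902 [Mono 1 2 1 0; Mono 1 3 4 0];
  GramRow 255913306752647 [Mono 1 2 1 0; Mono (-1) 4 0 0];
  GramRow 38236329306051 [Mono 1 2 1 0; Mono (-1) 4 1 0];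
  GramRow 189172493211592 [Mono 1 2 1 0; Mono (-1) 4 2 0];
  GramRow 50373577476337 [Mono 1 2 1 0; Mono (-1) 4 3 0];
  GramRow 198406442414218 [Mono 1 2 1 0; Mono 1 5 1 0];
  GramRow 168529980973647 [Mono 1 2 1 0; Mono (-1) 5 2 0];
  GramRow 100927544639799 [Mono 1 2 1 0; Mono (-1) 6 1 0];
  GramRow 15127814392072947 [Mono 1 2 1 0];
  GramRow 18424769758760 [Mono 1 2 2 0; Mono 1 2 3 0];
  GramRow 1329489338917 [Mono 1 2 2 0; Mono 1 2 4 0];
  GramRow 20967516209448 [Mono 1 2 2 0; Mono (-1) 3 0 0];
  GramRow 164307859551702 [Mono 1 2 2 0; Mono 1 3 1 0];
  GramRow 117360054148439 [Mono 1 2 2 0; Mono (-1) 3 2 0];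
  GramRow 72481826758449 [Mono 1 2 2 0; Mono 1 3 3 0];
  GramRow 101408684404105 [Mono 1 2 2 0; Mono (-1) 3 4 0];
  GramRow 101031207011626 [Mono 1 2 2 0; Mono 1 4 0 0];
  GramRow 170448060345746 [Mono 1 2 2 0; Mono 1 4 1 0];
  GramRow 71355987206566 [Mono 1 2 2 0; Mono 1 4 2 0];
  GramRow 19825415466191 [Mono 1 2 2 0; Mono 1 4 3 0];
  GramRow 55342764825738 [Mono 1 2 2 0; Mono 1 5 1 0];
  GramRow 115229351633365 [Mono 1 2 2 0; Mono (-1) 5 2 0];
  GramRow 43556482167907 [Mono 1 2 2 0; Mono (-1) 6 1 0];
  GramRow 16030418194499552 [Mono 1 2 2 0];
  GramRow 27829008843895 [Mono 1 2 3 0; Mono (-1) 2 4 0];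
  GramRow 27841837401169 [Mono 1 2 3 0; Mono 1 3 0 0];
  GramRow 93406762179543 [Mono 1 2 3 0; Mono (-1) 3 1 0];
  GramRow 49457041587313 [Mono 1 2 3 0; Mono (-1) 3 2 0];
  GramRow 5740455614576 [Mono 1 2 3 0; Mono 1 3 3 0];
  GramRow 28052704183422 [Mono 1 2 3 0; Mono (-1) 3 4 0];
  GramRow 37936250789940 [Mono 1 2 3 0; Mono 1 4 0 0];
  GramRow 60500361754399 [Mono 1 2 3 0; Mono 1 4 1 0];
  GramRow 40754010263781 [Mono 1 2 3 0; Mono 1 4 2 0];
  GramRow 8026465562507 [Mono 1 2 3 0; Mono (-1) 4 3 0];
  GramRow 15379093852063 [Mono 1 2 3 0; Mono (-1) 5 1 0];
  GramRow 32460051338458 [Mono 1 2 3 0; Mono 1 5 2 0];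
  GramRow 15485513291761 [Mono 1 2 3 0; Mono 1 6 1 0];
  GramRow 16597457495610496 [Mono 1 2 3 0];
  GramRow 854939277241 [Mono 1 2 4 0; Mono 1 3 0 0];
  GramRow 27299172873690 [Mono 1 2 4 0; Mono 1 3 1 0];
  GramRow 23270456370253 [Mono 1 2 4 0; Mono 1 3 2 0];
  GramRow 7494857838628 [Mono 1 2 4 0; Mono (-1) 3 3 0];
  GramRow 1843564976425 [Mono 1 2 4 0; Mono 1 3 4 0];
  GramRow 3929663870333 [Mono 1 2 4 0; Mono (-1) 4 0 0];
  GramRow 65434703041385 [Mono 1 2 4 0; Mono (-1) 4 1 0];
  GramRow 407465809919 [Mono 1 2 4 0; Mono 1 4 2 0];
  GramRow 102889643367 [Mono 1 2 4 0; Mono 1 4 3 0];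
  GramRow 14112636412320 [Mono 1 2 4 0; Mono (-1) 5 1 0];
  GramRow 2104314079787 [Mono 1 2 4 0; Mono (-1) 5 2 0];
  GramRow 4587135521405 [Mono 1 2 4 0; Mono 1 6 1 0];
  GramRow 16902817150740849 [Mono 1 2 4 0];
  GramRow 128493196253811 [Mono 1 3 0 0; Mono (-1) 3 1 0];
  GramRow 64056988371980 [Mono 1 3 0 0; Mono (-1) 3 2 0];
  GramRow 6890694420949 [Mono 1 3 0 0; Mono (-1) 3 3 0];
  GramRow 10233082640787 [Mono 1 3 0 0; Mono 1 3 4 0];
  GramRow 7074179757572 [Mono 1 3 0 0; Mono 1 4 0 0];
  GramRow 11044110143871 [Mono 1 3 0 0; Mono 1 4 1 0];
  GramRow 693011945788 [Mono 1 3 0 0; Mono (-1) 4 2 0];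
  GramRow 9291775497603 [Mono 1 3 0 0; Mono (-1) 4 3 0];
  GramRow 19312907875831 [Mono 1 3 0 0; Mono (-1) 5 1 0];
  GramRow 9662436098228 [Mono 1 3 0 0; Mono (-1) 5 2 0];
  GramRow 21299886315981 [Mono 1 3 0 0; Mono (-1) 6 1 0];
  GramRow 16713186729947440 [Mono 1 3 0 0];
  GramRow 47976808238659 [Mono 1 3 1 0; Mono (-1) 3 2 0];
  GramRow 149275998970708 [Mono 1 3 1 0; Mono 1 3 3 0];
  GramRow 78546178679630 [Mono 1 3 1 0; Mono (-1) 3 4 0];
  GramRow 26237718110887 [Mono 1 3 1 0; Mono (-1) 4 0 0];
  GramRow 136076982277479 [Mono 1 3 1 0; Mono (-1) 4 1 0];
  GramRow 15947092176075 [Mono 1 3 1 0; Mono (-1) 4 2 0];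
  GramRow 70210624145759 [Mono 1 3 1 0; Mono (-1) 4 3 0];
  GramRow 25872841000413 [Mono 1 3 1 0; Mono (-1) 5 1 0];
  GramRow 17368510803303 [Mono 1 3 1 0; Mono (-1) 5 2 0];
  GramRow 3462232203557 [Mono 1 3 1 0; Mono 1 6 1 0];
  GramRow 15466255489872683 [Mono 1 3 1 0];
  GramRow 63376399150948 [Mono 1 3 2 0; Mono (-1) 3 3 0];
  GramRow 7482783752144 [Mono 1 3 2 0; Mono 1 3 4 0];
  GramRow 51790376206035 [Mono 1 3 2 0; Mono (-1) 4 0 0];
  GramRow 134525581224077 [Mono 1 3 2 0; Mono (-1) 4 1 0];
  GramRow 65685253215955 [Mono 1 3 2 0; Mono 1 4 2 0];
  GramRow 40621914966354 [Mono 1 3 2 0; Mono (-1) 4 3 0];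
  GramRow 44247965365721 [Mono 1 3 2 0; Mono 1 5 1 0];
  GramRow 22240557873080 [Mono 1 3 2 0; Mono 1 5 2 0];
  GramRow 5119936065041 [Mono 1 3 2 0; Mono (-1) 6 1 0];
  GramRow 16041871984652841 [Mono 1 3 2 0];
  GramRow 9178966155488 [Mono 1 3 3 0; Mono (-1) 3 4 0];
  GramRow 19523383601 [Mono 1 3 3 0; Mono 1 4 0 0];
  GramRow 103969901002268 [Mono 1 3 3 0; Mono 1 4 1 0];
  GramRow 10170206390132 [Mono 1 3 3 0; Mono (-1) 4 2 0];
  GramRow 18090028939582 [Mono 1 3 3 0; Mono (-1) 4 3 0];
  GramRow 4412299613630 [Mono 1 3 3 0; Mono (-1) 5 1 0];
  GramRow 7659433694767 [Mono 1 3 3 0; Mono (-1) 5 2 0];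
  GramRow 8993645423812 [Mono 1 3 3 0; Mono (-1) 6 1 0];
  GramRow 16551079653230897 [Mono 1 3 3 0];
  GramRow 693582049176 [Mono 1 3 4 0; Mono (-1) 4 0 0];
  GramRow 96581122399350 [Mono 1 3 4 0; Mono (-1) 4 1 0];
  GramRow 24267996027105 [Mono 1 3 4 0; Mono 1 4 2 0];
  GramRow 277994610156 [Mono 1 3 4 0; Mono 1 4 3 0];
  GramRow 6343672306270 [Mono 1 3 4 0; Mono (-1) 5 1 0];
  GramRow 1479542094639 [Mono 1 3 4 0; Mono (-1) 5 2 0];
  GramRow 3558392819729 [Mono 1 3 4 0; Mono 1 6 1 0];
  GramRow 16544940494470292 [Mono 1 3 4 0];
  GramRow 117501439611730 [Mono 1 4 0 0; Mono 1 4 1 0];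
  GramRow 23362725737797 [Mono 1 4 0 0; Mono (-1) 4 2 0];
  GramRow 1457916613102 [Mono 1 4 0 0; Mono (-1) 4 3 0];
  GramRow 13763053360256 [Mono 1 4 0 0; Mono 1 5 1 0];
  GramRow 6839178459852 [Mono 1 4 0 0; Mono 1 5 2 0];
  GramRow 7397362851034 [Mono 1 4 0 0; Mono (-1) 6 1 0];
  GramRow 16486068676698254 [Mono 1 4 0 0];
  GramRow 8359836104928 [Mono 1 4 1 0; Mono 1 4 2 0];
  GramRow 2453034464143 [Mono 1 4 1 0; Mono 1 4 3 0];
  GramRow 46804782282399 [Mono 1 4 1 0; Mono (-1) 5 1 0];
  GramRow 65758856509927 [Mono 1 4 1 0; Mono 1 5 2 0];
  GramRow 10000539563074 [Mono 1 4 1 0; Mono 1 6 1 0];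
  GramRow 15970256335864670 [Mono 1 4 1 0];
  GramRow 696610797322 [Mono 1 4 2 0; Mono 1 4 3 0];
  GramRow 32738732152300 [Mono 1 4 2 0; Mono (-1) 5 1 0];
  GramRow 47484441730259 [Mono 1 4 2 0; Mono 1 5 2 0];
  GramRow 24053187983346 [Mono 1 4 2 0; Mono 1 6 1 0];
  GramRow 16521045856976791 [Mono 1 4 2 0];
  GramRow 6659771921041 [Mono 1 4 3 0; Mono 1 5 1 0];
  GramRow 6281221409371 [Mono 1 4 3 0; Mono 1 5 2 0];
  GramRow 517183946279 [Mono 1 4 3 0; Mono (-1) 6 1 0];
  GramRow 16869448590226831 [Mono 1 4 3 0];
  GramRow 17780259134836 [Mono 1 5 1 0; Mono 1 5 2 0];
  GramRow 12686618409209 [Mono 1 5 1 0; Mono 1 6 1 0];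
  GramRow 16745662998186250 [Mono 1 5 1 0];
  GramRow 3489912298470 [Mono 1 5 2 0; Mono 1 6 1 0];
  GramRow 16634995049071783 [Mono 1 5 2 0];
  GramRow 16849541383748435 [Mono 1 6 1 0]
].

Lemma gram_eval_f1 x1 x2 x3 :
  gram_eval gram_rows x1 x2 = 2 ^ 60 * (f1 x1 x2 x3 * Theta1 x1 x2 x3 ^ 2).
Proof.
  unfold gram_eval, gram_rows, f1, Theta1.
  cbn [fold_right row_weight row_poly peval12 mc e1 e2].
  field.
Qed.

Lemma gram_rows_in : rows_in_I1b 7 gram_rows = true.
Proof. reflexivity. Qed.

Definition f2_Theta2_root : poly :=
  [Mono 1 5 0 1; Mono 1 3 0 3; Mono 2 3 0 1; Mono 1 1 0 3; Mono 1 1 0 1].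

Lemma f2_Theta2_sq x1 x2 x3 :
  sos_eval [f2_Theta2_root] x1 x2 x3 = f2 x1 x2 x3 * Theta2 x1 x2 x3 ^ 2.
Proof. unfold sos_eval, peval, mono_eval, f2, Theta2. simpl. ring. Qed.

Lemma f2_Theta2_root_in : poly_in I2 7 f2_Theta2_root.
Proof.
  unfold poly_in, f2_Theta2_root, mono_in, I2.
  repeat apply Forall_cons; try apply Forall_nil; simpl; intuition lia.
Qed.

Lemma fpoly_rational_sos :
  exists sigma1 sigma2 : R -> R -> R -> R,
    SOS_deg I1 7 sigma1 /\ SOS_deg I2 7 sigma2 /\
    forall x1 x2 x3, fpoly x1 x2 x3 =
      sigma1 x1 x2 x3 / (Theta1 x1 x2 x3) ^ 2 + sigma2 x1 x2 x3 / (Theta2 x1 x2 x3) ^ 2.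
Proof.
  exists (sos_eval (gram_sos (2 ^ 60) gram_rows)), (sos_eval [f2_Theta2_root]).
  split; [|split].
  - exists (gram_sos (2 ^ 60) gram_rows).
    split; [exact (gram_sos_in _ _ _ gram_rows_in) | reflexivity].
  - exists [f2_Theta2_root].
    split; [constructor; [exact f2_Theta2_root_in | constructor] | reflexivity].
  - intros x1 x2 x3.
    rewrite (sos_eval_gram_sos _ 7), gram_eval_f1 with (x3 := x3), f2_Theta2_sq;
      [| apply pow_lt; lra | exact gram_rows_in].
    pose proof (Theta1_pos x1 x2 x3). pose proof (Theta2_pos x1 x2 x3).
    unfold fpoly. field. lra.
Qed.

Theorem mainTheorem9 :
  (forall x1 x2 x3 : R, 0 <= fpoly x1 x2 x3) /\
  ~ (exists sigma1 sigma2 : R -> R -> R -> R,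
        SOS I1 sigma1 /\ SOS I2 sigma2 /\
        forall x1 x2 x3, fpoly x1 x2 x3 = sigma1 x1 x2 x3 + sigma2 x1 x2 x3) /\
  (exists sigma1 sigma2 : R -> R -> R -> R,
        SOS_deg I1 7 sigma1 /\ SOS_deg I2 7 sigma2 /\
        forall x1 x2 x3, fpoly x1 x2 x3 =
          sigma1 x1 x2 x3 / (Theta1 x1 x2 x3) ^ 2
          + sigma2 x1 x2 x3 / (Theta2 x1 x2 x3) ^ 2).
Proof.
  split; [|split; [|exact fpoly_rational_sos]].
  - intros x1 x2 x3.
    destruct fpoly_rational_sos as [sigma1 [sigma2 [H1 [H2 ->]]]].
    pose proof (SOS_deg_nonneg _ _ _ x1 x2 x3 H1).
    pose proof (SOS_deg_nonneg _ _ _ x1 x2 x3 H2).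
    pose proof (pow_lt _ 2 (Theta1_pos x1 x2 x3)).
    pose proof (pow_lt _ 2 (Theta2_pos x1 x2 x3)).
    apply Rplus_le_le_0_compat; apply Rle_mult_inv_pos; assumption.
  - intros [sigma1 [sigma2 [[t1 [s1 [_ H1]]] [[t2 [s2 [_ H2]]] Hf]]]].
    apply fpoly_not_sos. exists (s1 ++ s2). intros x1 x2 x3.
    rewrite sos_eval_app, <- H1, <- H2, Hf. reflexivity.
Qed.
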